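(* Let $S$ be a finite set with $|S|\ge2$ and fix $C>1$. Define $\omega_S:F(S)\to[1,\infty)$ by $\omega_S(e)=C^{\gamma_S(e)}$ if $e\neq\theta_S$ and $\omega_S(\theta_S)=C$. Then $\omega_S$ is a submultiplicative weight on $F(S)$. Moreover, defining $\psi:F(S)\to\{0,1\}$ by $\psi(e)=1$ for $e\ne\theta_S$ and $\psi(\theta_S)=0$: (i) $\sup_{e,f\in F(S)}\dfrac{|\psi(e)\psi(f)-\psi(ef)|}{\omega_S(e)\omega_S(f)}\le C^{-|S|}$; (ii) for every multiplicative function $\phi:F(S)\to\{0,1\}$, $\sup_{e\in F(S)}\omega_S(e)^{-1}|\psi(e)-\phi(e)|\ge C^{-1}$.
   Context: $F(S)$ is the free semilattice on $S$: the set of non-empty subsets of $S$ with product given by union. $\gamma_S(e)$ is the cardinality of $e\in F(S)$ (the minimal number of generators needed to produce $e$), and $\theta_S=S$ is the least (zero) element of $F(S)$. A weight $\omega$ is submultiplicative if $\omega(xy)\le\omega(x)\omega(y)$. *)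

From HB Require Import structures.
From mathcomp Require Import all_boot all_order all_algebra.
Set Implicit Arguments. Unset Strict Implicit. Unset Printing Implicit Defensive.
Import Order.TTheory GRing.Theory Num.Theory.
Local Open Scope ring_scope.

(* The free semilattice F(S): non-empty subsets of S, product = union.
   We represent elements as sets e : {set S} with (e != set0); the product
   of e and f is e :|: f. *)
Definition inF (S : finType) (e : {set S}) : bool := e != set0.

Definition gammaS (S : finType) (e : {set S}) : nat := #|e|.
Definition thetaS (S : finType) : {set S} := [set: S].

Definition omegaS (R : realFieldType) (S : finType) (C : R) (e : {set S}) : R :=
  if e == thetaS S then C else C ^+ gammaS e.

Definition psiS (R : realFieldType) (S : finType) (e : {set S}) : R :=
  if e == thetaS S then 0 else 1.

From HB Require Import structures.
From mathcomp Require Import all_boot all_order all_algebra.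
Set Implicit Arguments. Unset Strict Implicit. Unset Printing Implicit Defensive.
Import Order.TTheory GRing.Theory Num.Theory.
Local Open Scope ring_scope.

(* Elements of the free semilattice F(S) are the non-empty
   subsets of S, the product is union and the zero theta_S is S itself.
   - The weight omega_S is at least C on F(S) (a non-empty set has at least
     one element); submultiplicativity follows from #|e :|: f| <= #|e| + #|f|
     when e :|: f is not theta_S, and from omega_S >= C otherwise.
   - The defect psi(e) psi(f) - psi(ef) of psi vanishes unless e, f are both
     different from theta_S while e :|: f = theta_S; then the sets e and f
     cover S, so omega_S(e) omega_S(f) = C^(#|e| + #|f|) >= C^#|S|, giving (i).
   - A multiplicative phi : F(S) -> bool is determined by its values on
     singletons, since every non-empty set is a finite union of singletons.
     Hence either phi(theta_S) = 1, and e = theta_S witnesses (ii), or phi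
     vanishes on some singleton {s} != theta_S (as #|S| >= 2), which is then
     the witness, since omega_S({s}) = C and psi({s}) = 1. *)

Definition multiplicativeF (S : finType) (phi : {set S} -> bool) : Prop :=
  forall e f : {set S}, inF e -> inF f -> phi (e :|: f) = phi e && phi f.

Lemma setU_thetaS_neq (S : finType) (e f : {set S}) :
  e :|: f != thetaS S -> (e != thetaS S) && (f != thetaS S).
Proof.
rewrite /thetaS; apply: contraR; rewrite negb_and !negbK.
by case/orP => /eqP ->; rewrite ?setTU ?setUT.
Qed.

(* A multiplicative phi which holds on all singletons holds on all of F(S),
   because every non-empty set is the union of its singletons. *)
Lemma multiplicativeF_singletons (S : finType) (phi : {set S} -> bool) :
  multiplicativeF phi -> (forall s : S, phi [set s]) ->
  forall A : {set S}, inF A -> phi A.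
Proof.
move=> phiM phi1 A.
have -> : A = \bigcup_(x in A) [set x].
  apply/setP => y; apply/idP/bigcupP => [yA | [x xA /set1P -> //]].
  by exists y; rewrite ?set11.
elim/big_ind: _ => [|X Y phiX phiY | x _ _ //]; first by rewrite /inF eqxx.
have [-> | nX] := eqVneq X set0; first by rewrite set0U.
have [-> | nY] := eqVneq Y set0; first by rewrite setU0.
by move=> _; rewrite phiM // phiX // phiY.
Qed.

Section Weight.

Variables (R : realFieldType) (S : finType) (C : R).
Hypothesis C_gt1 : 1 < C.

Let C_gt0 : 0 < C. Proof. exact: lt_trans C_gt1. Qed.

Lemma omegaS_gt0 (e : {set S}) : 0 < omegaS C e.
Proof. by rewrite /omegaS; case: ifP => _; rewrite ?exprn_gt0. Qed.

Lemma omegaS_geC (e : {set S}) : inF e -> C <= omegaS C e.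
Proof.
rewrite /inF /omegaS /gammaS => ne; case: ifP => // _.
by rewrite -{1}(expr1 C) ler_eXn2l // lt0n cards_eq0.
Qed.

Lemma omegaS_ge1 (e : {set S}) : inF e -> 1 <= omegaS C e.
Proof. by move=> he; apply: le_trans (ltW C_gt1) (omegaS_geC he). Qed.

(* Submultiplicativity: the weight of e :|: f is C (bounded by omega_S(e) >= C
   times omega_S(f) >= 1) or C^#|e :|: f| <= C^(#|e| + #|f|). *)
Lemma omegaS_submul (e f : {set S}) : inF e -> inF f ->
  omegaS C (e :|: f) <= omegaS C e * omegaS C f.
Proof.
move=> he hf; have [/eqP eft | neft] := boolP (e :|: f == thetaS S).
  rewrite /omegaS eft eqxx -[X in X <= _]mulr1.
  by rewrite ler_pM ?(ltW C_gt0) // -/(omegaS C _) ?omegaS_geC ?omegaS_ge1.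
have /andP [ne nf] := setU_thetaS_neq neft.
rewrite /omegaS (negbTE neft) (negbTE ne) (negbTE nf) -exprD ler_eXn2l //.
exact: leq_card_setU.
Qed.

Lemma omegaS_cover (e f : {set S}) :
  e != thetaS S -> f != thetaS S -> e :|: f = thetaS S ->
  C ^+ #|S| <= omegaS C e * omegaS C f.
Proof.
move=> ne nf ef; rewrite /omegaS (negbTE ne) (negbTE nf) -exprD ler_eXn2l //.
by rewrite -cardsT -/(thetaS S) -ef leq_card_setU.
Qed.

Lemma psiS_defect (e f : {set S}) :
  `|psiS R e * psiS R f - psiS R (e :|: f)| =
  if [&& e != thetaS S, f != thetaS S & e :|: f == thetaS S] then 1 else 0.
Proof.
rewrite /psiS; have [ef | nef] := eqVneq (e :|: f) (thetaS S); last first.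
  by have /andP [ne nf] := setU_thetaS_neq nef;
     rewrite (negbTE ne) (negbTE nf) andbF mulr1 subrr normr0.
rewrite andbT subr0; have [_ | _] := eqVneq e (thetaS S).
  by rewrite mul0r normr0.
by have [_ | _] := eqVneq f (thetaS S); rewrite ?mulr0 ?mulr1 ?normr0 ?normr1.
Qed.

Lemma psiS_defect_le (e f : {set S}) :
  `|psiS R e * psiS R f - psiS R (e :|: f)| / (omegaS C e * omegaS C f)
    <= C ^- #|S|.
Proof.
have omega2_gt0 : 0 < omegaS C e * omegaS C f by rewrite mulr_gt0 ?omegaS_gt0.
rewrite psiS_defect; case: and3P => [[ne nf /eqP ef] | _].
  by rewrite mul1r lef_pV2 ?posrE ?exprn_gt0 ?omegaS_cover.
by rewrite mul0r invr_ge0 ltW ?exprn_gt0.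
Qed.

Lemma psiS_far_from_multiplicative (phi : {set S} -> bool) :
  (1 < #|S|)%N -> multiplicativeF phi ->
  exists2 e : {set S}, inF e &
    C^-1 <= (omegaS C e)^-1 * `|psiS R e - (phi e)%:R|.
Proof.
move=> S_gt1 phiM.
have thetaF : inF (thetaS S) by rewrite /inF -cards_eq0 cardsT -lt0n ltnW.
case phi_theta : (phi (thetaS S)).
  exists (thetaS S) => //.
  by rewrite /omegaS /psiS eqxx phi_theta sub0r normrN normr1 mulr1.
have [s phi_s] : exists s, ~~ phi [set s].
  apply/existsP; rewrite -negb_forall; apply/negP => /forallP phi1.
  by rewrite (multiplicativeF_singletons phiM phi1 thetaF) in phi_theta.
have ns : [set s] != thetaS S.
  by apply: contraTneq S_gt1 => s_theta; rewrite -cardsT -/(thetaS S) -s_theta cards1.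
exists [set s]; first by apply/set0Pn; exists s; rewrite set11.
by rewrite /omegaS /psiS (negbTE ns) (negbTE phi_s) /gammaS cards1 expr1 subr0 normr1 mulr1.
Qed.

End Weight.

Theorem propositionp (R : realFieldType) (S : finType) (C : R)
  (hS : (1 < #|S|)%N) (hC : 1 < C) :
  ((forall e : {set S}, inF e -> 1 <= omegaS C e) /\
   (forall e f : {set S}, inF e -> inF f ->
      omegaS C (e :|: f) <= omegaS C e * omegaS C f)) /\
  (forall e f : {set S}, inF e -> inF f ->
     `|psiS R e * psiS R f - psiS R (e :|: f)| / (omegaS C e * omegaS C f)
       <= C ^- #|S|) /\
  (forall phi : {set S} -> bool,
     (forall e f : {set S}, inF e -> inF f -> phi (e :|: f) = phi e && phi f) ->
     exists2 e : {set S}, inF e &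
       C^-1 <= (omegaS C e)^-1 * `|psiS R e - (phi e)%:R|).
Proof.
split; first split.
- exact: omegaS_ge1.
- exact: omegaS_submul.
split=> [e f _ _ | phi phiM].
- exact: psiS_defect_le.
- exact: psiS_far_from_multiplicative.
Qed.
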